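(* Let $\mathcal H$ be a real Hilbert space, $k\ge1$, and let $\mathbf{x}_1,\ldots,\mathbf{x}_k\in\mathcal H$ be norm one vectors with $\dim(\operatorname{span}\{\mathbf{x}_1,\ldots,\mathbf{x}_k\})\le 2$. Then there is a nonzero continuous symmetric $k$-linear form $T$ on $\mathcal H$ attaining its norm at $(\mathbf{x}_1,\ldots,\mathbf{x}_k)$.
   Context: $\|T\|=\sup\{|T(\mathbf{w}_1,\ldots,\mathbf{w}_k)|:\|\mathbf{w}_i\|\le1\}$, and $T$ attains its norm at $(\mathbf{x}_1,\ldots,\mathbf{x}_k)$ if $|T(\mathbf{x}_1,\ldots,\mathbf{x}_k)|=\|T\|$. *)

From HB Require Import structures.
From mathcomp Require Import all_boot all_order all_algebra all_fingroup.
From mathcomp Require Import all_classical all_reals all_analysis.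
Set Implicit Arguments. Unset Strict Implicit. Unset Printing Implicit Defensive.
Import Order.TTheory GRing.Theory Num.Theory.
Import numFieldNormedType.Exports.
Local Open Scope ring_scope.
Local Open Scope classical_set_scope.

Section Defs.
Variables (R : realType) (V : normedModType R).

Definition inner_product_of_norm (ip : V -> V -> R) : Prop :=
  (forall x y, ip x y = ip y x) /\
  (forall (a : R) x y z, ip (a *: x + y) z = a * ip x z + ip y z) /\
  (forall x, `|x| = Num.sqrt (ip x x)).

Definition upd (k : nat) (w : 'I_k -> V) (i : 'I_k) (v : V) : 'I_k -> V :=
  fun j => if j == i then v else w j.

Definition kmultilinear (k : nat) (T : ('I_k -> V) -> R) : Prop :=
  forall (w : 'I_k -> V) (i : 'I_k) (a : R) (u v : V),
    T (upd w i (a *: u + v)) = a * T (upd w i u) + T (upd w i v).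

Definition ksymmetric_form (k : nat) (T : ('I_k -> V) -> R) : Prop :=
  forall (s : 'S_k) (w : 'I_k -> V), T (fun i => w (s i)) = T w.

Definition kcontinuous_form (k : nat) (T : ('I_k -> V) -> R) : Prop :=
  forall (w : 'I_k -> V) (e : R), 0 < e -> exists2 d : R, 0 < d &
    forall v : 'I_k -> V, (forall i, `|v i - w i| < d) -> `|T v - T w| < e.

Definition kform_norm (k : nat) (T : ('I_k -> V) -> R) : R :=
  sup [set r | exists w : 'I_k -> V, (forall i, `|w i| <= 1) /\ r = `|T w|].

Definition attains_norm_at (k : nat) (T : ('I_k -> V) -> R) (x : 'I_k -> V) : Prop :=
  `|T x| = kform_norm T.

Definition span_dim_le2 (k : nat) (x : 'I_k -> V) : Prop :=
  exists u1 u2 : V, forall i, exists a b : R, x i = a *: u1 + b *: u2.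

End Defs.

From HB Require Import structures.
From mathcomp Require Import all_boot all_order all_algebra all_fingroup.
From mathcomp Require Import all_classical all_reals all_analysis.
From mathcomp Require Import ring lra.
Import Order.TTheory GRing.Theory Num.Theory.
Import numFieldNormedType.Exports.
From mathcomp Require Import complex.
Import Normc.

Set Implicit Arguments.
Unset Strict Implicit.
Unset Printing Implicit Defensive.
Local Open Scope ring_scope.
Local Open Scope complex_scope.

(* Pick e1, e2 orthonormal (allowing zero vectors) whose span contains every
   x_i, and identify that plane with C through z(w) = <w,e1> + i <w,e2>.  By
   Bessel's inequality |z(w)| <= |w|, with equality on the plane.  With
   P(w) = z(w_1) ... z(w_k), the form T(w) = Re (conj (P x) * P w) is real
   k-linear and symmetric, |T w| <= |P x| |P w| <= 1 on the unit ball, and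
   T x = |P x|^2 = 1. *)

Section InnerProduct.
Variables (R : realType) (V : normedModType R) (ip : V -> V -> R).
Hypothesis hip : inner_product_of_norm ip.
Implicit Types (a b : R) (e u v w x y z : V).

Lemma ipC x y : ip x y = ip y x. Proof. by case: hip. Qed.

Lemma ipDZl a x y z : ip (a *: x + y) z = a * ip x z + ip y z.
Proof. by case: hip => _ []. Qed.

Lemma norm_ip x : `|x| = Num.sqrt (ip x x). Proof. by case: hip => _ []. Qed.

Lemma ip0l z : ip 0 z = 0.
Proof. by have := ipDZl 1 0 0 z; rewrite scaler0 addr0 mul1r; lra. Qed.

Lemma ipZl a x z : ip (a *: x) z = a * ip x z.
Proof. by have := ipDZl a x 0 z; rewrite !addr0 ip0l addr0. Qed.

Lemma ipDl x y z : ip (x + y) z = ip x z + ip y z.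
Proof. by have := ipDZl 1 x y z; rewrite scale1r mul1r. Qed.

Lemma ipBl x y z : ip (x - y) z = ip x z - ip y z.
Proof. by rewrite ipDl -scaleN1r ipZl mulN1r. Qed.

Lemma ip0r z : ip z 0 = 0. Proof. by rewrite ipC ip0l. Qed.

Lemma ipZr a x z : ip z (a *: x) = a * ip z x.
Proof. by rewrite ipC ipZl ipC. Qed.

Lemma ipDr x y z : ip z (x + y) = ip z x + ip z y.
Proof. by rewrite ipC ipDl !(ipC z). Qed.

Lemma ipBr x y z : ip z (x - y) = ip z x - ip z y.
Proof. by rewrite ipC ipBl !(ipC z). Qed.

Lemma ipxx_ge0 x : 0 <= ip x x.
Proof.
rewrite leNgt; apply/negP => ltx0.
have /eqP : `|x| = 0 by rewrite norm_ip; apply/eqP; rewrite sqrtr_eq0 ltW.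
by rewrite normr_eq0 => /eqP x0; move: ltx0; rewrite x0 ip0l ltxx.
Qed.

Lemma ipxx x : ip x x = `|x| ^+ 2.
Proof. by rewrite norm_ip sqr_sqrtr // ipxx_ge0. Qed.

(* Allowing [e = 0] covers the case where the x_i span fewer than two
   dimensions. *)
Definition unit_or_zero (e : V) := ip e e = 1 \/ e = 0.

Lemma unit_or_zero0 : unit_or_zero 0. Proof. by right. Qed.

Lemma unit_or_zero_ip e : unit_or_zero e -> forall w, ip w e * ip e e = ip w e.
Proof. by case=> [->|->] w; rewrite ?mulr1 // ip0r mul0r. Qed.

Lemma unit_or_zero_normalize u : unit_or_zero (`|u|^-1 *: u).
Proof.
have [->|u0] := eqVneq u 0; first by right; rewrite scaler0.
by left; rewrite ipZl ipZr ipxx; field; rewrite normr_eq0.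
Qed.

Lemma normalizeK u : `|u| *: (`|u|^-1 *: u) = u.
Proof.
have [->|u0] := eqVneq u 0; first by rewrite !scaler0.
by rewrite scalerA mulfV ?scale1r // normr_eq0.
Qed.

Lemma span2_orthonormal k (x : 'I_k -> V) : span_dim_le2 x ->
  exists e1 e2, [/\ unit_or_zero e1, unit_or_zero e2, ip e1 e2 = 0 &
    forall i, exists a b, x i = a *: e1 + b *: e2].
Proof.
case=> u1 [u2 xu].
pose e1 := `|u1|^-1 *: u1; pose v := u2 - ip u2 e1 *: e1.
pose e2 := `|v|^-1 *: v.
have ue1 : unit_or_zero e1 := unit_or_zero_normalize u1.
have o12 : ip e1 e2 = 0.
  by rewrite ipZr ipBr ipZr (ipC e1 u2) unit_or_zero_ip // subrr mulr0.
have u1E : u1 = `|u1| *: e1 by rewrite normalizeK.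
have u2E : u2 = `|v| *: e2 + ip u2 e1 *: e1 by rewrite normalizeK subrK.
have ue2 : unit_or_zero e2 := unit_or_zero_normalize v.
clearbody e1 v e2; exists e1, e2; split=> // i.
have [a [b ->]] := xu i; exists (a * `|u1| + b * ip u2 e1), (b * `|v|).
rewrite {1}u2E {1}u1E scalerDr !scalerA scalerDl.
by rewrite addrA addrAC.
Qed.

Lemma bessel2 w e1 e2 : unit_or_zero e1 -> unit_or_zero e2 -> ip e1 e2 = 0 ->
  ip w e1 ^+ 2 + ip w e2 ^+ 2 <= ip w w.
Proof.
move=> ue1 ue2 o12; set a := ip w e1; set b := ip w e2.
have := ipxx_ge0 (w - (a *: e1 + b *: e2)).
rewrite !ipBl !ipDl !ipZl !ipBr !ipDr !ipZr (ipC e2 e1) o12 (ipC e1 w) (ipC e2 w).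
have := unit_or_zero_ip ue1 w; have := unit_or_zero_ip ue2 w; rewrite -/a -/b.
by move=> -> ->; rewrite !expr2; nra.
Qed.

Lemma normr_ip_le w e : unit_or_zero e -> `|ip w e| <= `|w|.
Proof.
move=> ue; have := bessel2 w ue unit_or_zero0 (ip0r e).
rewrite ip0r expr0n /= addr0 ipxx.
by move=> le2; rewrite -ler_sqr ?nnegrE // real_normK ?num_real.
Qed.

End InnerProduct.

Section Continuity.
Variables (R : realType) (V : normedModType R) (k : nat).
Implicit Types f g : ('I_k -> V) -> R.

Lemma kcontinuous_form_cst a : kcontinuous_form (fun _ : 'I_k -> V => a).
Proof. by move=> w e e0; exists 1 => // v _; rewrite subrr normr0. Qed.

Lemma kcontinuous_form_common_delta f g :
  kcontinuous_form f -> kcontinuous_form g ->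
  forall w e, 0 < e -> exists2 d, 0 < d & forall v, (forall i, `|v i - w i| < d) ->
    `|f v - f w| < e /\ `|g v - g w| < e.
Proof.
move=> cf cg w e e0; have [d1 d10 h1] := cf w e e0; have [d2 d20 h2] := cg w e e0.
exists (Num.min d1 d2); first by rewrite lt_min d10 d20.
move=> v vw; split; [apply: h1 | apply: h2] => i;
  by have := vw i; rewrite lt_min => /andP[].
Qed.

Lemma kcontinuous_formD f g : kcontinuous_form f -> kcontinuous_form g ->
  kcontinuous_form (fun w => f w + g w).
Proof.
move=> cf cg w e e0.
have [d d0 fgd] := kcontinuous_form_common_delta cf cg w (divr_gt0 e0 (ltr0Sn _ 1)).
exists d => // v /fgd[fv gv].
have -> : f v + g v - (f w + g w) = (f v - f w) + (g v - g w) by ring.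
by apply: le_lt_trans (ler_normD _ _) _; lra.
Qed.

Lemma kcontinuous_formN f : kcontinuous_form f -> kcontinuous_form (fun w => - f w).
Proof.
move=> cf w e e0; have [d d0 fd] := cf w e e0.
by exists d => // v /fd; rewrite -opprD normrN.
Qed.

Lemma kcontinuous_formM f g : kcontinuous_form f -> kcontinuous_form g ->
  kcontinuous_form (fun w => f w * g w).
Proof.
move=> cf cg w e e0.
pose M := 1 + `|f w| + `|g w|.
have M0 : 0 < M by rewrite /M; move: (normr_ge0 (f w)) (normr_ge0 (g w)); lra.
pose e' := Num.min 1 (e / M).
have e'0 : 0 < e' by rewrite lt_min ltr01 divr_gt0.
have e'1 : e' <= 1 by rewrite ge_min lexx.
have e'M : e' * M <= e by rewrite -ler_pdivlMr // ge_min lexx orbT.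
have [d d0 fgd] := kcontinuous_form_common_delta cf cg w e'0.
exists d => // v /fgd[fv gv].
have -> : f v * g v - f w * g w =
    (f v - f w) * (g v - g w) + f w * (g v - g w) + g w * (f v - f w) by ring.
(* [A B < e'] because [A, B < e' <= 1], and the other two terms are below [(|fw| + |gw|) e']. *)
apply: le_lt_trans (ler_normD _ _) _; apply: le_lt_trans (lerD (ler_normD _ _) (lexx _)) _.
rewrite !normrM; move: e'M; rewrite /M.
move: (`|f v - f w|) (`|g v - g w|) (normr_ge0 (f v - f w)) (normr_ge0 (g v - g w)) fv gv.
move: (normr_ge0 (f w)) (normr_ge0 (g w)) => a0 b0 A B A0 B0 Ae Be.
nra.
Qed.

End Continuity.

Section ComplexContinuity.
Variables (R : realType) (V : normedModType R) (k : nat).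

Definition kcontinuous_cform (f : ('I_k -> V) -> R[i]) :=
  kcontinuous_form (fun w => Re (f w)) /\ kcontinuous_form (fun w => Im (f w)).

Lemma kcontinuous_cform_cst c : kcontinuous_cform (fun _ => c).
Proof. by split; apply: kcontinuous_form_cst. Qed.

Lemma kcontinuous_cformM f g : kcontinuous_cform f -> kcontinuous_cform g ->
  kcontinuous_cform (fun w => f w * g w).
Proof.
move=> [cf1 cf2] [cg1 cg2]; split.
  have -> : (fun w => Re (f w * g w)) =
      (fun w => Re (f w) * Re (g w) + - (Im (f w) * Im (g w))).
    by apply/funext => w; case: (f w) (g w) => [a b] [c d].
  by apply: kcontinuous_formD; [|apply: kcontinuous_formN];
    apply: kcontinuous_formM.
have -> : (fun w => Im (f w * g w)) =
    (fun w => Re (f w) * Im (g w) + Im (f w) * Re (g w)).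
  by apply/funext => w; case: (f w) (g w) => [a b] [c d].
by apply: kcontinuous_formD; apply: kcontinuous_formM.
Qed.

Lemma kcontinuous_cform_prod (I : Type) (r : seq I) (F : I -> ('I_k -> V) -> R[i]) :
  (forall i, kcontinuous_cform (F i)) ->
  kcontinuous_cform (fun w => \prod_(i <- r) F i w).
Proof.
move=> cF; elim: r => [|i r IHr].
  by under eq_fun do rewrite big_nil; apply: kcontinuous_cform_cst.
by under eq_fun do rewrite big_cons; apply: kcontinuous_cformM.
Qed.

End ComplexContinuity.

Lemma normr_Re_le_normc (R : rcfType) (z : R[i]) : `|Re z| <= normc z.
Proof.
case: z => a b /=; rewrite -sqrtr_sqr ler_sqrt ?addr_ge0 ?sqr_ge0 //.
by rewrite lerDl sqr_ge0.
Qed.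

Lemma normc_ge0 (R : rcfType) (z : R[i]) : 0 <= normc z.
Proof. by case: z => a b; apply: sqrtr_ge0. Qed.

Lemma normc_conj (R : rcfType) (z : R[i]) : normc z^* = normc z.
Proof. by case: z => a b /=; rewrite sqrrN. Qed.

Lemma Re_conjM_normc (R : rcfType) (z : R[i]) : Re (z^* * z) = normc z ^+ 2.
Proof. by case: z => a b /=; rewrite sqr_sqrtr ?addr_ge0 ?sqr_ge0 //; ring. Qed.

Lemma attains_norm_at_max (R : realType) (V : normedModType R) k
    (T : ('I_k -> V) -> R) (x : 'I_k -> V) :
  (forall i, `|x i| <= 1) ->
  (forall w, (forall i, `|w i| <= 1) -> `|T w| <= `|T x|) ->
  attains_norm_at T x.
Proof.
move=> x1 Tmax; rewrite /attains_norm_at /kform_norm; set S := (X in sup X).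
have Sx : S `|T x| by exists x.
have ubS : ubound S `|T x| by move=> r [w [w1 ->]]; apply: Tmax.
apply/eqP; rewrite eq_le sup_upper_bound //=; last by split; exists `|T x|.
by rewrite ge_sup //; exists `|T x|.
Qed.

Section PlaneForm.
Variables (R : realType) (V : normedModType R) (ip : V -> V -> R).
Hypothesis hip : inner_product_of_norm ip.
Variables (e1 e2 : V) (k : nat).
Hypotheses (ue1 : unit_or_zero ip e1) (ue2 : unit_or_zero ip e2)
  (o12 : ip e1 e2 = 0).

Definition coordc (w : V) : R[i] := ip w e1 +i* ip w e2.

Lemma coordcDZ a u v : coordc (a *: u + v) = a%:C * coordc u + coordc v.
Proof. by rewrite /coordc !(ipDZl hip); simpc. Qed.

Lemma normc_coordc_le w : normc (coordc w) <= `|w|.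
Proof. by rewrite (norm_ip hip) ler_sqrt ?(ipxx_ge0 hip) ?(bessel2 hip). Qed.

Lemma normc_coordc_span a b :
  normc (coordc (a *: e1 + b *: e2)) = `|a *: e1 + b *: e2|.
Proof.
rewrite (norm_ip hip) /coordc /=; congr Num.sqrt.
rewrite !(ipDl hip, ipZl hip, ipDr hip, ipZr hip) (ipC hip e2 e1) o12.
have e11 := unit_or_zero_ip hip ue1 e1; have e22 := unit_or_zero_ip hip ue2 e2.
by rewrite !mulr0 !addr0 !add0r !exprMn !expr2 e11 e22; ring.
Qed.

Definition prod_coordc (w : 'I_k -> V) : R[i] := \prod_(i < k) coordc (w i).

Definition plane_form (c : R[i]) (w : 'I_k -> V) : R := Re (c * prod_coordc w).

Lemma prod_coordc_upd w i v :
  prod_coordc (upd w i v) = coordc v * \prod_(j < k | j != i) coordc (w j).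
Proof.
rewrite /prod_coordc (bigD1 i) //= /upd eqxx; congr (_ * _).
by apply: eq_bigr => j /negbTE ->.
Qed.

Lemma normc_prod_coordc w :
  normc (prod_coordc w) = \prod_(i < k) normc (coordc (w i)).
Proof. exact: (big_morph _ (@normcM R) (normc1 R)). Qed.

Lemma plane_form_multilinear c : kmultilinear (plane_form c).
Proof.
move=> w i a u v; rewrite /plane_form !prod_coordc_upd coordcDZ.
move: (coordc u) (coordc v) (\prod_(j < k | j != i) _) => [p q] [r s] [t y].
by case: c => c1 c2 /=; ring.
Qed.

Lemma plane_form_symmetric c : ksymmetric_form (plane_form c).
Proof.
by move=> s w; rewrite /plane_form /prod_coordc [in RHS](reindex_inj (@perm_inj _ s)).
Qed.

Lemma plane_form_continuous c : kcontinuous_form (plane_form c).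
Proof.
have cz i : kcontinuous_cform (fun w : 'I_k -> V => coordc (w i)).
  by split=> w e e0; exists e => // v vw; rewrite -(ipBl hip);
    apply: le_lt_trans (normr_ip_le hip _ _) (vw i).
exact: (kcontinuous_cformM (kcontinuous_cform_cst V k c)
  (kcontinuous_cform_prod (index_enum 'I_k) cz)).1.
Qed.

Lemma plane_form_le c w : (forall i, `|w i| <= 1) -> `|plane_form c w| <= normc c.
Proof.
move=> w1; apply: le_trans (normr_Re_le_normc _) _.
rewrite normcM normc_prod_coordc -[leRHS]mulr1 ler_wpM2l ?normc_ge0 //.
apply: prodr_ile1 => i _; rewrite normc_ge0 /=.
exact: le_trans (normc_coordc_le _) (w1 i).
Qed.

End PlaneForm.

Theorem proposition4p3 (R : realType) (H : completeNormedModType R)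
    (ip : H -> H -> R) (hip : inner_product_of_norm ip)
    (k : nat) (hk : (1 <= k)%N) (x : 'I_k -> H)
    (hx : forall i, `|x i| = 1) (hspan : span_dim_le2 x) :
  exists T : ('I_k -> H) -> R,
    kmultilinear T /\ ksymmetric_form T /\ kcontinuous_form T /\
    (exists w : 'I_k -> H, T w <> 0) /\ attains_norm_at T x.
Proof.
have [e1 [e2 [ue1 ue2 o12 xE]]] := span2_orthonormal hip hspan.
pose P := prod_coordc ip e1 e2 x.
have P1 : normc P = 1.
  rewrite normc_prod_coordc big1 // => i _.
  by have [a [b xiE]] := xE i; rewrite xiE normc_coordc_span // -xiE hx.
pose T : ('I_k -> H) -> R := plane_form ip e1 e2 P^*.
have Tx : T x = 1 by rewrite /T /plane_form Re_conjM_normc P1 expr1n.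
exists T; split; [|split; [|split; [|split]]].
- exact: plane_form_multilinear.
- exact: plane_form_symmetric.
- exact: plane_form_continuous.
- by exists x; rewrite Tx; apply/eqP; rewrite oner_eq0.
- apply: attains_norm_at_max => [i|w w1]; first by rewrite hx.
  by rewrite Tx normr1 -P1 -normc_conj; apply: plane_form_le.
Qed.
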